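(* Let $(U_n)_{n\ge1}$ and $(V_n)_{n\ge1}$ be sequences in $\mathcal{D}$ converging in $\tau_{\mathcal{D}}$ to $U\in\mathcal{D}$ and $V\in\mathcal{D}$ respectively, and suppose $U_n\ge_sV_n$ for all $n$. Then $U\ge_sV$.
   Context: $\mathcal{D}$ is the set of non-increasing càdlàg functions $U:\mathbb{R}\to[0,1]$ with $\lim_{x\to-\infty}U(x)=1$ and $\lim_{x\to\infty}U(x)=0$. The topology $\tau_{\mathcal{D}}$: $U_n\to U$ iff $U_n(x)\to U(x)$ at every continuity point $x$ of $U$ (this is the image of the weak topology on probability measures under $\mu\mapsto(x\mapsto\mu((x,\infty)))$). For $U,V\in\mathcal{D}$, $U\ge_sV$ (''$U$ is more stretched than $V$'') means: for every $c\in\mathbb{R}$ and $x_1\le x_2$, $U(x_1)>V(x_1+c)$ implies $U(x_2)\ge V(x_2+c)$. *)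

From Stdlib Require Import Reals.
Open Scope R_scope.

Definition right_continuous_at (f : R -> R) (x : R) : Prop :=
  forall eps, 0 < eps -> exists delta, 0 < delta /\
    forall y, x <= y < x + delta -> Rabs (f y - f x) < eps.

Definition has_left_limit (f : R -> R) (x : R) : Prop :=
  exists l, forall eps, 0 < eps -> exists delta, 0 < delta /\
    forall y, x - delta < y < x -> Rabs (f y - l) < eps.

Definition cadlag (f : R -> R) : Prop :=
  forall x, right_continuous_at f x /\ has_left_limit f x.

Definition in_D (U : R -> R) : Prop :=
  (forall x, 0 <= U x <= 1) /\
  (forall x y, x <= y -> U y <= U x) /\
  cadlag U /\
  (forall eps, 0 < eps -> exists M, forall x, x <= M -> Rabs (U x - 1) < eps) /\
  (forall eps, 0 < eps -> exists M, forall x, M <= x -> Rabs (U x) < eps).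

Definition tauD_converges (Un : nat -> R -> R) (U : R -> R) : Prop :=
  forall x, continuity_pt U x -> Un_cv (fun n => Un n x) (U x).

Definition more_stretched (U V : R -> R) : Prop :=
  forall c x1 x2, x1 <= x2 -> V (x1 + c) < U x1 -> V (x2 + c) <= U x2.

(* Suppose [V (x1 + c) < U x1] but [U x2 < V (x2 + c)] with [x1 <= x2].  By
   right-continuity both strict inequalities persist on short intervals to the
   right of [x1] and of [x2], and these intervals contain points [y1 <= y2] at
   which [U] and [V (. + c)] are continuous: a monotone function is continuous
   somewhere in every open interval (nested intervals on which it drops less
   and less), and a sum of two nonincreasing functions is continuous only where
   both summands are.  At continuity points the limits are pointwise, so for
   large [n] the same two inequalities hold for [Un n] and [Vn n] at [y1] and
   [y2], contradicting [more_stretched (Un n) (Vn n)]. *)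
From Stdlib Require Import Reals Lra Lia Classical ClassicalEpsilon.
Open Scope R_scope.

Definition nonincreasing (f : R -> R) : Prop := forall x y, x <= y -> f y <= f x.

Lemma continuity_pt_eps_delta (f : R -> R) (x : R) :
  continuity_pt f x <->
  forall eps, 0 < eps -> exists d, 0 < d /\
    forall z, Rabs (z - x) < d -> Rabs (f z - f x) < eps.
Proof.
  unfold continuity_pt, continue_in, limit1_in, limit_in, D_x, no_cond; simpl.
  unfold R_dist. split.
  - intros Hf eps Heps. destruct (Hf eps Heps) as [d [Hd Hz]].
    exists d. split; [exact Hd |]. intros z Hzx.
    destruct (Req_dec x z) as [<- | Hne].
    + rewrite Rminus_diag, Rabs_R0. exact Heps.
    + apply Hz. auto.
  - intros Hf eps Heps. destruct (Hf eps Heps) as [d [Hd Hz]].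
    exists d. split; [exact Hd |]. intros z [_ Hzx]. apply Hz, Hzx.
Qed.

Lemma continuity_pt_shift (V : R -> R) (c y : R) :
  continuity_pt (fun x => V (x + c)) y -> continuity_pt V (y + c).
Proof.
  rewrite !continuity_pt_eps_delta. intros HW eps Heps.
  destruct (HW eps Heps) as [d [Hd Hz]]. exists d. split; [exact Hd |].
  intros z Hzy. specialize (Hz (z - c)).
  replace (z - c + c) with z in Hz by ring.
  apply Hz. replace (z - c - y) with (z - (y + c)) by ring. exact Hzy.
Qed.

Lemma right_continuous_at_shift (V : R -> R) (c x : R) :
  right_continuous_at V (x + c) -> right_continuous_at (fun y => V (y + c)) x.
Proof.
  intros HV eps Heps. destruct (HV eps Heps) as [d [Hd Hy]].
  exists d. split; [exact Hd |]. intros y Hxy. apply Hy. lra.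
Qed.

Lemma nonincreasing_sum_continuity_pt (f g : R -> R) (y : R) :
  nonincreasing f -> nonincreasing g ->
  continuity_pt (fun x => f x + g x) y -> continuity_pt f y.
Proof.
  intros Hf Hg. rewrite !continuity_pt_eps_delta. intros Hfg eps Heps.
  destruct (Hfg eps Heps) as [d [Hd Hz]]. exists d. split; [exact Hd |].
  intros z Hzy. specialize (Hz z Hzy).
  (* the increments of [f] and [g] between [y] and [z] have the same sign *)
  destruct (Rle_dec y z) as [Hyz | Hzy'].
  - pose proof (Hf y z Hyz). pose proof (Hg y z Hyz).
    rewrite Rabs_left1 in Hz |- *; lra.
  - pose proof (Hf z y ltac:(lra)). pose proof (Hg z y ltac:(lra)).
    rewrite Rabs_right in Hz |- *; lra.
Qed.

Lemma grid_drop_telescope (g : R -> R) (a h eps : R) (N : nat) :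
  (forall i, (i < N)%nat -> eps <= g (a + INR i * h) - g (a + INR (S i) * h)) ->
  INR N * eps <= g a - g (a + INR N * h).
Proof.
  induction N as [| N IH]; intros Hsteps.
  - simpl. replace (a + 0 * h) with a by ring. lra.
  - assert (Hlast := Hsteps N (Nat.lt_succ_diag_r N)).
    assert (Hfirst := IH (fun i Hi => Hsteps i (Nat.lt_lt_succ_r _ _ Hi))).
    rewrite S_INR at 1. lra.
Qed.

Lemma nonincreasing_small_drop (g : R -> R) (a b eps : R) :
  nonincreasing g -> a < b -> 0 < eps ->
  exists a' b', a <= a' < b' /\ b' <= b /\ g a' - g b' < eps.
Proof.
  intros Hg Hab Heps.
  destruct (INR_archimed eps (g a - g b) Heps) as [N HN].
  assert (HN0 : 0 < INR N).
  { destruct N as [| N]; [| apply lt_0_INR; lia].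
    pose proof (Hg a b ltac:(lra)). simpl in HN. lra. }
  set (h := (b - a) / INR N).
  assert (Hh : 0 < h) by (apply Rdiv_lt_0_compat; lra).
  assert (Hend : a + INR N * h = b) by (unfold h; field; lra).
  destruct (classic (exists i, (i < N)%nat /\
              g (a + INR i * h) - g (a + INR (S i) * h) < eps))
    as [[i [Hi Hdrop]] | Hnone].
  - exists (a + INR i * h), (a + INR (S i) * h).
    pose proof (pos_INR i). rewrite S_INR in *.
    assert (INR i + 1 <= INR N) by (rewrite <- S_INR; apply le_INR; lia).
    assert (0 <= INR i * h) by (apply Rmult_le_pos; lra).
    assert ((INR i + 1) * h <= INR N * h) by (apply Rmult_le_compat_r; lra).
    repeat split; lra.
  - assert (Htel : INR N * eps <= g a - g (a + INR N * h)).
    { apply grid_drop_telescope. intros i Hi.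
      apply Rnot_lt_le. intro Hdrop. apply Hnone. exists i. split; assumption. }
    rewrite Hend in Htel. lra.
Qed.

Lemma nested_intervals_common_point (l r : nat -> R) :
  (forall n, l n < r n) -> (forall n, l n < l (S n)) -> (forall n, r (S n) < r n) ->
  exists y, forall n, l n < y < r n.
Proof.
  intros Hlr Hl Hr.
  assert (Hmono : forall n m, (n <= m)%nat -> l n <= l m /\ r m <= r n).
  { intros n m Hnm. induction Hnm as [| m _ IH]; [lra |].
    specialize (Hl m). specialize (Hr m). lra. }
  assert (Hlr' : forall n m, l n < r m).
  { intros n m.
    destruct (Hmono n (Nat.max n m) (Nat.le_max_l n m)) as [Hn _].
    destruct (Hmono m (Nat.max n m) (Nat.le_max_r n m)) as [_ Hm].
    specialize (Hlr (Nat.max n m)). lra. }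
  set (E := fun x => exists n, x = l n).
  assert (HEb : bound E) by (exists (r 0%nat); intros x [n ->]; left; apply Hlr').
  destruct (completeness E HEb (ex_intro _ (l 0%nat) (ex_intro _ 0%nat eq_refl)))
    as [y [Hub Hlub]].
  exists y. intros n. split.
  - apply Rlt_le_trans with (l (S n)); [apply Hl |]. apply Hub. exists (S n). reflexivity.
  - apply Rle_lt_trans with (r (S n)); [| apply Hr].
    apply Hlub. intros x [m ->]. left. apply Hlr'.
Qed.

Lemma nested_intervals_point (P : nat -> R -> R -> Prop) (a b : R) :
  a < b ->
  (forall k a b, a < b -> exists a' b', a < a' < b' /\ b' < b /\ P k a' b') ->
  exists y, a < y < b /\ forall k, exists a' b', a' < y < b' /\ P k a' b'.
Proof.
  intros Hab Hshrink.
  destruct (choice (fun (kI : nat * (R * R)) (J : R * R) =>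
              let '(k, (a, b)) := kI in
              a < b -> a < fst J < snd J /\ snd J < b /\ P k (fst J) (snd J)))
    as [F HF].
  { intros [k [a' b']]. destruct (Rlt_dec a' b') as [Hlt | Hge].
    - destruct (Hshrink k a' b' Hlt) as [a'' [b'' H]]. exists (a'', b''). auto.
    - exists (a', b'). intro. contradiction. }
  set (I := fix I (n : nat) : R * R :=
              match n with O => (a, b) | S n => F (n, I n) end).
  assert (Hstep : forall n, fst (I n) < snd (I n) ->
            fst (I n) < fst (I (S n)) < snd (I (S n)) /\ snd (I (S n)) < snd (I n) /\
            P n (fst (I (S n))) (snd (I (S n)))).
  { intros n. specialize (HF (n, I n)). simpl in HF |- *.
    destruct (I n) as [an bn]. exact HF. }
  assert (HI : forall n, fst (I n) < snd (I n)).
  { induction n as [| n IH]; [exact Hab |]. destruct (Hstep n IH) as [H _]. lra. }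
  destruct (nested_intervals_common_point (fun n => fst (I n)) (fun n => snd (I n)) HI)
    as [y Hy].
  - intros n. apply (Hstep n (HI n)).
  - intros n. apply (Hstep n (HI n)).
  - exists y. split; [exact (Hy 0%nat) |]. intros k.
    exists (fst (I (S k))), (snd (I (S k))). split; [apply Hy | apply (Hstep k (HI k))].
Qed.

Lemma nonincreasing_continuity_point (g : R -> R) (a b : R) :
  nonincreasing g -> a < b -> exists y, a < y < b /\ continuity_pt g y.
Proof.
  intros Hg Hab.
  destruct (nested_intervals_point (fun k a' b' => g a' - g b' < / INR (S k)) a b Hab)
    as [y [Hy Hdrops]].
  { intros k a' b' Hab'.
    destruct (nonincreasing_small_drop g (a' + (b' - a') / 3) (b' - (b' - a') / 3)
                (/ INR (S k)) Hg ltac:(lra))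
      as [a'' [b'' H]].
    - apply Rinv_0_lt_compat, lt_0_INR. lia.
    - exists a'', b''. repeat split; lra. }
  exists y. split; [exact Hy |]. apply continuity_pt_eps_delta. intros eps Heps.
  destruct (archimed_cor1 eps Heps) as [N [HN HN0]].
  destruct (Hdrops (pred N)) as [a' [b' [Hy' Hdrop]]].
  rewrite (Nat.succ_pred_pos N HN0) in Hdrop.
  exists (Rmin (y - a') (b' - y)). split; [apply Rmin_glb_lt; lra |].
  intros z Hz. apply Rabs_def2 in Hz.
  pose proof (Rmin_l (y - a') (b' - y)). pose proof (Rmin_r (y - a') (b' - y)).
  pose proof (Hg a' z ltac:(lra)). pose proof (Hg z b' ltac:(lra)).
  pose proof (Hg a' y ltac:(lra)). pose proof (Hg y b' ltac:(lra)).
  apply Rabs_def1; lra.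
Qed.

Lemma nonincreasing_common_continuity_point (f g : R -> R) (a b : R) :
  nonincreasing f -> nonincreasing g -> a < b ->
  exists y, a < y < b /\ continuity_pt f y /\ continuity_pt g y.
Proof.
  intros Hf Hg Hab.
  assert (Hfg : nonincreasing (fun x => f x + g x)).
  { intros x y Hxy. pose proof (Hf x y Hxy). pose proof (Hg x y Hxy). lra. }
  destruct (nonincreasing_continuity_point _ a b Hfg Hab) as [y [Hy Hc]].
  exists y. split; [exact Hy | split].
  - exact (nonincreasing_sum_continuity_pt f g y Hf Hg Hc).
  - apply (nonincreasing_sum_continuity_pt g f y Hg Hf).
    apply continuity_pt_locally_ext with (fun x => f x + g x) 1; [lra | | exact Hc].
    intros; ring.
Qed.

Lemma right_continuous_strict_gap (f g : R -> R) (x : R) :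
  right_continuous_at f x -> nonincreasing g -> g x < f x ->
  exists d, 0 < d /\ forall y, x <= y < x + d -> g y < f y.
Proof.
  intros Hf Hg Hgap. destruct (Hf (f x - g x) ltac:(lra)) as [d [Hd Hy]].
  exists d. split; [exact Hd |]. intros y Hxy.
  destruct (Rabs_def2 _ _ (Hy y Hxy)). pose proof (Hg x y (proj1 Hxy)). lra.
Qed.

Lemma Un_cv_eventually_lt (u v : nat -> R) (lu lv : R) :
  Un_cv u lu -> Un_cv v lv -> lu < lv ->
  exists N, forall n, (N <= n)%nat -> u n < v n.
Proof.
  intros Hu Hv Hlt.
  destruct (Hu ((lv - lu) / 2) ltac:(lra)) as [Nu HNu].
  destruct (Hv ((lv - lu) / 2) ltac:(lra)) as [Nv HNv].
  exists (Nu + Nv)%nat. intros n Hn.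
  specialize (HNu n ltac:(lia)). specialize (HNv n ltac:(lia)).
  unfold R_dist in *. apply Rabs_def2 in HNu, HNv. lra.
Qed.

Lemma crossing_at_continuity_points (f g : R -> R) (x1 x2 : R) :
  nonincreasing f -> nonincreasing g ->
  right_continuous_at f x1 -> right_continuous_at g x2 ->
  x1 <= x2 -> g x1 < f x1 -> f x2 < g x2 ->
  exists y1 y2, y1 <= y2 /\ g y1 < f y1 /\ f y2 < g y2 /\
    continuity_pt f y1 /\ continuity_pt g y1 /\
    continuity_pt f y2 /\ continuity_pt g y2.
Proof.
  intros Hf Hg Hcf Hcg Hx Hgap1 Hgap2.
  destruct (right_continuous_strict_gap f g x1 Hcf Hg Hgap1) as [d1 [Hd1 Hgap1']].
  destruct (right_continuous_strict_gap g f x2 Hcg Hf Hgap2) as [d2 [Hd2 Hgap2']].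
  pose proof (Rmin_l d1 d2). pose proof (Rmin_r d1 d2).
  destruct (nonincreasing_common_continuity_point f g x1 (x1 + Rmin d1 d2) Hf Hg)
    as [y1 [Hy1 [cf1 cg1]]].
  { pose proof (Rmin_glb_lt d1 d2 0 Hd1 Hd2). lra. }
  destruct (nonincreasing_common_continuity_point f g (Rmax y1 x2) (x2 + d2) Hf Hg)
    as [y2 [Hy2 [cf2 cg2]]].
  { apply Rmax_lub_lt; lra. }
  pose proof (Rmax_l y1 x2). pose proof (Rmax_r y1 x2).
  exists y1, y2. repeat split; try assumption; try lra.
  - apply Hgap1'. lra.
  - apply Hgap2'. lra.
Qed.

Theorem lemma2p1 (Un Vn : nat -> R -> R) (U V : R -> R) :
  (forall n, (1 <= n)%nat -> in_D (Un n)) ->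
  (forall n, (1 <= n)%nat -> in_D (Vn n)) ->
  in_D U -> in_D V ->
  tauD_converges Un U -> tauD_converges Vn V ->
  (forall n, (1 <= n)%nat -> more_stretched (Un n) (Vn n)) ->
  more_stretched U V.
Proof.
  intros _ _ [_ [mU [cU _]]] [_ [mV [cV _]]] HU HV Hms c x1 x2 Hx Hgap1.
  apply Rnot_lt_le. intro Hgap2.
  set (W := fun y => V (y + c)).
  assert (mW : nonincreasing W) by (intros y z Hyz; apply mV; lra).
  destruct (crossing_at_continuity_points U W x1 x2 mU mW (proj1 (cU x1))
              (right_continuous_at_shift V c x2 (proj1 (cV (x2 + c)))) Hx Hgap1 Hgap2)
    as [y1 [y2 [Hy [Hgap1' [Hgap2' [cU1 [cW1 [cU2 cW2]]]]]]]].
  destruct (Un_cv_eventually_lt (fun n => Vn n (y1 + c)) (fun n => Un n y1) _ _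
              (HV _ (continuity_pt_shift V c y1 cW1)) (HU y1 cU1) Hgap1')
    as [N1 HN1].
  destruct (Un_cv_eventually_lt (fun n => Un n y2) (fun n => Vn n (y2 + c)) _ _
              (HU y2 cU2) (HV _ (continuity_pt_shift V c y2 cW2)) Hgap2')
    as [N2 HN2].
  set (N := S (N1 + N2)).
  pose proof (Hms N ltac:(unfold N; lia) c y1 y2 Hy (HN1 N ltac:(unfold N; lia))).
  pose proof (HN2 N ltac:(unfold N; lia)). lra.
Qed.
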